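(* Let $E$ be a real topological vector space, $\Omega$ a nonempty open subset of $E$, and $f_0,\dots,f_m:\Omega\to\mathbb{R}$. Let $\hat{x}$ be a solution of the problem $(\mathcal{Q}_1)$: minimize $f_0(x)$ subject to $x\in\Omega$ and $f_i(x)\le0$ for all $i\in\{1,\dots,m\}$. Assume that $F=(f_0,f_1,\dots,f_m)$ is $D^+_M$-pseudoconvex at $\hat{x}$ and that $f_j$ is upper semicontinuous at $\hat{x}$ for every $j\in\{1,\dots,m\}$ with $f_j(\hat{x})<0$. Then there exists a nonzero $(\lambda^0,\dots,\lambda^m)\in\mathbb{R}^{m+1}$ such that (a) $\lambda^i\ge0$ for $i=0,\dots,m$; (b) $\lambda^if_i(\hat{x})=0$ for $i=1,\dots,m$; (c) with $f=\sum_{i=0}^m\lambda^if_i$, for every $x\in\Omega$ we have $\lambda^0f_0(\hat{x})=f(\hat{x})\le f(x)$.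
   Context: $D^+f(x)(u):=\limsup_{t\to0^+}\frac{f(x+tu)-f(x)}{t}$ (with $D^+f(x)(0)=0$), $D^+_Mf(x)(u):=\sup_{w\in E}\{D^+f(x)(u+w)-D^+f(x)(w)\}$; $f$ is $D^+_M$-differentiable at $x$ if both are finite for all $u\in E$. A map $F=(f_0,\dots,f_m):\Omega\to\mathbb{R}^{m+1}$ is $D^+_M$-differentiable at $\hat{x}$ if each $f_i$ is, and then $D^+_MF(\hat{x}):=(D^+_Mf_0(\hat{x}),\dots,D^+_Mf_m(\hat{x}))$. $F$ is $D^+_M$-pseudoconvex at $\hat{x}$ if it is $D^+_M$-differentiable at $\hat{x}$ and for every $x\in\Omega$ there exists $\eta=\eta(x,\hat{x})\in E$ such that for all $w\in(\mathbb{R}_+)^{m+1}$: $\langle w,D^+_MF(\hat{x})(\eta)\rangle\ge0\implies\langle w,F(x)-F(\hat{x})\rangle\ge0$. *)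

From HB Require Import structures.
From mathcomp Require Import all_boot all_order all_algebra.
From mathcomp Require Import all_classical all_reals all_analysis.
Set Implicit Arguments. Unset Strict Implicit. Unset Printing Implicit Defensive.
Import Order.TTheory GRing.Theory Num.Theory.
Local Open Scope classical_set_scope.
Local Open Scope ring_scope.

Section Dini.
Variables (R : realType) (E : topologicalLmodType R).

(* upper Dini derivative D^+f(x)(u) = limsup_{t -> 0+} (f(x+tu)-f(x))/t,
   with limsup_{t->0+} g(t) := inf_{delta>0} sup_{0<t<delta} g(t) in \bar R *)
Definition Dplus (f : E -> R) (x u : E) : \bar R :=
  ereal_inf [set ereal_sup [set ((f (x + t *: u) - f x) / t)%:E | t in `]0, d[]
            | d in `]0, +oo[].

Definition DMplus (f : E -> R) (x u : E) : \bar R :=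
  ereal_sup [set (Dplus f x (u + w)%R - Dplus f x w)%E | w in [set: E]].

Definition DM_differentiable (f : E -> R) (x : E) : Prop :=
  forall u : E, Dplus f x u \is a fin_num /\ DMplus f x u \is a fin_num.

Definition DM_pseudoconvex (m : nat) (F : 'I_m.+1 -> E -> R) (Omega : set E)
    (xhat : E) : Prop :=
  (forall i, DM_differentiable (F i) xhat) /\
  forall x, Omega x -> exists eta : E, forall w : 'I_m.+1 -> R,
    (forall i, 0 <= w i) ->
    0 <= \sum_(i < m.+1) w i * fine (DMplus (F i) xhat eta) ->
    0 <= \sum_(i < m.+1) w i * (F i x - F i xhat).

Definition usc_at (f : E -> R) (x : E) : Prop :=
  forall e : R, 0 < e -> \forall y \near x, f y < f x + e.

Definition solves_Q1 (m : nat) (F : 'I_m.+1 -> E -> R) (Omega : set E)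
    (xhat : E) : Prop :=
  [/\ Omega xhat, (forall i : 'I_m.+1, i != ord0 -> F i xhat <= 0) &
      forall x, Omega x -> (forall i : 'I_m.+1, i != ord0 -> F i x <= 0) ->
        F ord0 xhat <= F ord0 x].
End Dini.

From HB Require Import structures.
From mathcomp Require Import all_boot all_order all_algebra.
From mathcomp Require Import all_classical all_reals all_analysis.
From mathcomp Require Import ring lra.
Set Implicit Arguments. Unset Strict Implicit. Unset Printing Implicit Defensive.
Import Order.TTheory GRing.Theory Num.Theory.
Local Open Scope classical_set_scope.
Local Open Scope ring_scope.

(* The functions [h_i = D^+_M f_i(xhat)] are finite and sublinear, and dominate
   the Dini derivatives [D^+ f_i(xhat)].  Optimality of [xhat], openness of
   [Omega] and upper semicontinuity of the inactive constraints therefore forbid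
   a direction [e] with [h_i e < 0] for every active index [i] (index 0 included).
   A Gordan-type alternative for finitely many sublinear functions, proved by
   induction from the case of two functions, yields convex weights [lam] on the
   active indices with [sum_i lam_i h_i >= 0] everywhere; pseudoconvexity at
   [xhat] turns this into the global inequality (c). *)

Section Sublinear.
Variables (R : realType) (E : lmodType R).
Implicit Types (p q : E -> R) (u v e : E).

Definition sublinear p : Prop :=
  (forall u v, p (u + v) <= p u + p v) /\
  (forall (s : R) u, 0 < s -> p (s *: u) <= s * p u).

Lemma sublinearD p u v : sublinear p -> p (u + v) <= p u + p v.
Proof. by case=> + _; apply. Qed.

Lemma sublinearZ p (s : R) u : sublinear p -> 0 < s -> p (s *: u) <= s * p u.
Proof. by case=> _; apply. Qed.

Lemma sublinearDZ p (a b : R) u v : sublinear p -> 0 < a -> 0 < b ->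
  p (a *: u + b *: v) <= a * p u + b * p v.
Proof.
move=> Sp a0 b0; apply: le_trans (sublinearD _ _ Sp) _.
by apply: lerD; apply: sublinearZ.
Qed.

Lemma sublinear_comb p q (a b : R) : sublinear p -> sublinear q ->
  0 <= a -> 0 <= b -> sublinear (fun e => a * p e + b * q e).
Proof.
move=> Sp Sq a0 b0; split=> [u v|s u s0].
  have := ler_wpM2l a0 (sublinearD u v Sp).
  have := ler_wpM2l b0 (sublinearD u v Sq); lra.
have := ler_wpM2l a0 (sublinearZ u Sp s0).
have := ler_wpM2l b0 (sublinearZ u Sq s0); nra.
Qed.

Definition fmax n (g : 'I_n.+1 -> E -> R) e : R :=
  g [arg max_(i > ord0) g i e]%O e.

Lemma fmax_ge n (g : 'I_n.+1 -> E -> R) i e : g i e <= fmax g e.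
Proof. by rewrite /fmax; case: arg_maxP => // j _; apply. Qed.

Lemma sublinear_fmax n (g : 'I_n.+1 -> E -> R) :
  (forall i, sublinear (g i)) -> sublinear (fmax g).
Proof.
move=> Sg; split=> [u v|s u s0]; rewrite {1}/fmax; case: arg_maxP => // i _ _.
  by apply: le_trans (sublinearD _ _ (Sg i)) _; rewrite lerD ?fmax_ge.
by apply: le_trans (sublinearZ _ (Sg i) s0) _; rewrite ler_pM2l ?fmax_ge.
Qed.

(* If [q e <= 0] at a descent point [e] of [p], moving slightly from [e]
   towards a descent point [e1] of [q] would give a common descent direction. *)
Lemma sublinear_pos_at_descent p q e1 e : sublinear p -> sublinear q ->
  (forall e, 0 <= p e \/ 0 <= q e) -> q e1 < 0 -> p e < 0 -> 0 < q e.
Proof.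
move=> Sp Sq H qe1 pe; rewrite ltNge; apply/negP => qe.
pose eps := - p e / (`|p e1| + 1).
have eps0 : 0 < eps by rewrite divr_gt0 ?oppr_gt0 ?ltr_wpDl.
have eps_pe1 : eps * p e1 < - p e.
  apply: le_lt_trans (_ : eps * `|p e1| < _); first by rewrite ler_pM2l ?ler_norm.
  by rewrite mulrAC ltr_pdivrMr ?ltr_wpDl // ltr_pM2l ?oppr_gt0 ?ltrDl.
have := sublinearD e (eps *: e1) Sp; have := sublinearZ e1 Sp eps0.
have := sublinearD e (eps *: e1) Sq; have := sublinearZ e1 Sq eps0.
have := H (e + eps *: e1); nra.
Qed.

Section TwoFunctions.
Variables p q : E -> R.
Hypotheses (Sp : sublinear p) (Sq : sublinear q).
Hypothesis no_common_descent : forall e, 0 <= p e \/ 0 <= q e.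

Let no_common_descent_sym e : 0 <= q e \/ 0 <= p e.
Proof. by case: (no_common_descent e); [right|left]. Qed.

Lemma sublinear_cross_le e e' : p e' < 0 -> q e < 0 -> q e * p e' <= p e * q e'.
Proof.
move=> pe' qe.
have pe : 0 < p e := sublinear_pos_at_descent Sq Sp no_common_descent_sym pe' qe.
have npe' : 0 < - p e' by rewrite oppr_gt0.
pose v := (- p e') *: e + p e *: e'.
have pv : p v <= 0 by have := sublinearDZ e e' Sp npe' pe; lra.
have qv := sublinearDZ e e' Sq npe' pe.
rewrite leNgt; apply/negP => cross.
have : 0 < p v.
  by apply: (sublinear_pos_at_descent Sq Sp no_common_descent_sym pe'); lra.
by rewrite ltNge pv.
Qed.

(* The weights are [s : 1], where [s] is the supremum of [-q/p] over the descent
   points of [q]; by [sublinear_cross_le] it lies below [q/-p] at every descent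
   point of [p]. *)
Lemma sublinear_gordan2 :
  exists a, 0 <= a <= 1 /\ forall e, 0 <= a * p e + (1 - a) * q e.
Proof.
have [p_ge0|/existsNP[e0 /negP]] := pselect (forall e, 0 <= p e).
  by exists 1; rewrite ler01 lexx; split=> // e; have := p_ge0 e; lra.
rewrite -ltNge => pe0.
have [q_ge0|/existsNP[e1 /negP]] := pselect (forall e, 0 <= q e).
  by exists 0; rewrite ler01 lexx; split=> // e; have := q_ge0 e; lra.
rewrite -ltNge => qe1.
have p_pos e : q e < 0 -> 0 < p e :=
  sublinear_pos_at_descent Sq Sp no_common_descent_sym pe0.
have ratio_le e e' : q e < 0 -> p e' < 0 -> - q e / p e <= q e' / - p e'.
  move=> qe pe'; rewrite ler_pdivrMr ?p_pos // mulrAC ler_pdivlMr ?oppr_gt0 //.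
  by have := sublinear_cross_le pe' qe; nra.
pose S := [set - q e / p e | e in [set e | q e < 0]].
have S0 : S !=set0 by exists (- q e1 / p e1), e1.
have supS : has_sup S.
  by split=> //; exists (q e0 / - p e0) => _ [e ? <-]; apply: ratio_le.
pose s := sup S.
have s_ub e : q e < 0 -> - q e / p e <= s.
  by move=> qe; apply: sup_upper_bound => //; exists e.
have s_lb e : p e < 0 -> s <= q e / - p e.
  by move=> pe; apply: ge_sup => // _ [e' ? <-]; apply: ratio_le.
have s_pos : 0 < s.
  by apply: lt_le_trans (s_ub _ qe1); rewrite divr_gt0 ?oppr_gt0 ?p_pos.
have s1_pos : 0 < 1 + s by rewrite ltr_wpDl.
exists (s / (1 + s)); split.
  by rewrite ler_pdivrMr // mul1r lerDr ler01 divr_ge0 ?ltW.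
move=> e; have -> : s / (1 + s) * p e + (1 - s / (1 + s)) * q e =
    (s * p e + q e) / (1 + s) by field; rewrite gt_eqF.
apply: divr_ge0; last exact: ltW.
have [pe|pe] := ltP (p e) 0.
  by have := s_lb _ pe; rewrite ler_pdivlMr ?oppr_gt0 // mulrN; lra.
have [qe|qe] := ltP (q e) 0.
  by have := s_ub _ qe; rewrite ler_pdivrMr ?p_pos //; lra.
by rewrite addr_ge0 // mulr_ge0 // ltW.
Qed.

End TwoFunctions.

Lemma sublinear_gordan n (g : 'I_n.+1 -> E -> R) :
  (forall i, sublinear (g i)) -> (forall e, exists i, 0 <= g i e) ->
  exists lam : 'I_n.+1 -> R, [/\ forall i, 0 <= lam i, \sum_i lam i = 1 &
    forall e, 0 <= \sum_i lam i * g i e].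
Proof.
elim: n g => [|n IH] g Sg g_alt.
  exists (fun=> 1); split=> [i||e]; rewrite ?big_ord1 ?ler01 ?mul1r //.
  by have [i] := g_alt e; rewrite (ord1 i).
pose q := g ord0; pose g' j := g (lift ord0 j).
have Sg' j : sublinear (g' j) by apply: Sg.
have pq_alt e : 0 <= fmax g' e \/ 0 <= q e.
  have [i] := g_alt e; case: (unliftP ord0 i) => [j ->|->] gi; last by right.
  by left; apply: le_trans gi (fmax_ge _ _ _).
have [a [/andP[a0 a1] a_comb]] :=
  sublinear_gordan2 (sublinear_fmax Sg') (Sg ord0) pq_alt.
pose k j e := a * g' j e + (1 - a) * q e.
have Sk j : sublinear (k j).
  by apply: sublinear_comb (Sg' j) (Sg ord0) a0 _; rewrite subr_ge0.
have [|b [b0 b1 b_comb]] := IH k Sk.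
  by move=> e; exists [arg max_(j > ord0) g' j e]%O; apply: a_comb.
exists (fun i => if unlift ord0 i is Some j then a * b j else 1 - a).
split=> [i||e].
- by case: unlift => [j|]; rewrite ?mulr_ge0 ?subr_ge0.
- rewrite big_ord_recl unlift_none.
  under eq_bigr do rewrite liftK.
  by rewrite -mulr_sumr b1 mulr1 subrK.
- rewrite big_ord_recl unlift_none.
  under eq_bigr do rewrite liftK.
  have bk : \sum_j b j * k j e = \sum_j a * b j * g' j e + (1 - a) * q e.
    have -> : (1 - a) * q e = \sum_j b j * ((1 - a) * q e).
      by rewrite -mulr_suml b1 mul1r.
    by rewrite -big_split; apply: eq_bigr => j _ /=; rewrite /k; ring.
  by rewrite addrC -bk; apply: b_comb.
Qed.
End Sublinear.

Section DiniDerivative.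
Variables (R : realType) (E : topologicalLmodType R) (f : E -> R) (x : E).

Lemma DplusZ_le (s : R) u : 0 < s -> (Dplus f x (s *: u) <= s%:E * Dplus f x u)%E.
Proof.
move=> s0; rewrite -ereal_inf_pZl //; apply: le_ereal_inf_tmp => _ [_ [d d0 <-] <-].
have d0' : 0 < d by move: d0; rewrite /= in_itv /= andbT.
apply: le_trans (ereal_inf_lbound _) _.
  by exists (d / s) => //=; rewrite in_itv /= andbT divr_gt0.
rewrite -ereal_sup_pZl //; apply: ereal_sup_le => _ [t + <-].
rewrite /= in_itv /= => /andP[t0 td].
exists ((f (x + (t * s) *: u) - f x) / (t * s))%:E.
  by exists (t * s) => //=; rewrite in_itv /= mulr_gt0 //= -ltr_pdivlMr.
by rewrite -EFinM scalerA; congr EFin; field; rewrite !gt_eqF.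
Qed.

Hypothesis f_diff : DM_differentiable f x.

Definition dplus u : R := fine (Dplus f x u).
Definition dmplus u : R := fine (DMplus f x u).

Lemma Dplus_fine u : Dplus f x u = (dplus u)%:E.
Proof. by rewrite /dplus fineK //; case: (f_diff u). Qed.

Lemma DMplus_fine u : DMplus f x u = (dmplus u)%:E.
Proof. by rewrite /dmplus fineK //; case: (f_diff u). Qed.

Lemma dplusZ (s : R) u : 0 < s -> dplus (s *: u) = s * dplus u.
Proof.
have le s' v : 0 < s' -> dplus (s' *: v) <= s' * dplus v.
  by move=> s'0; rewrite -lee_fin EFinM -!Dplus_fine DplusZ_le.
move=> s0; apply/eqP; rewrite eq_le le //=.
have := le s^-1 (s *: u).
rewrite invr_gt0 scalerA mulVf ?gt_eqF // scale1r => /(_ s0).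
by rewrite -(ler_pM2l s0) mulrA mulfV ?mul1r // lt0r_neq0.
Qed.

Lemma dplus0 : dplus 0 = 0.
Proof. by have := @dplusZ 2 0; rewrite scaler0 => /(_ (ltr0Sn _ 1)); lra. Qed.

Lemma dplus_sub_le_dmplus u w : dplus (u + w) - dplus w <= dmplus u.
Proof.
rewrite -lee_fin -DMplus_fine EFinB -!Dplus_fine.
by apply: ereal_sup_ubound; exists w.
Qed.

Lemma dmplus_le u c : (forall w, dplus (u + w) - dplus w <= c) -> dmplus u <= c.
Proof.
move=> H; rewrite -lee_fin -DMplus_fine; apply: ge_ereal_sup => _ [w _ <-].
by rewrite !Dplus_fine -EFinB lee_fin.
Qed.

Lemma dplus_le_dmplus u : dplus u <= dmplus u.
Proof. by have := dplus_sub_le_dmplus u 0; rewrite addr0 dplus0 subr0. Qed.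

Lemma sublinear_dmplus : sublinear dmplus.
Proof.
split=> [u v|s u s0]; apply: dmplus_le => w.
  have := dplus_sub_le_dmplus u (v + w); have := dplus_sub_le_dmplus v w.
  by rewrite addrA; lra.
have -> : s *: u + w = s *: (u + s^-1 *: w).
  by rewrite scalerDr scalerA divff ?gt_eqF ?scale1r.
rewrite dplusZ // -{2}[w]scale1r -(divff (lt0r_neq0 s0)) -scalerA dplusZ //.
by rewrite -mulrBr ler_pM2l // dplus_sub_le_dmplus.
Qed.

Lemma dplus_lt0_descent u :
  dplus u < 0 -> \forall t \near 0^'+, f (x + t *: u) < f x.
Proof.
rewrite -lte_fin -Dplus_fine => /ereal_inf_lt[_ [d d0 <-]].
have {}d0 : 0 < d by move: d0; rewrite /= in_itv /= andbT.
move=> sup_lt0; near=> t.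
have t0 : 0 < t by near: t; exact: nbhs_right_gt.
have td : t < d by near: t; exact: nbhs_right_lt.
have : (((f (x + t *: u) - f x) / t)%:E < 0%:E)%E.
  apply: le_lt_trans sup_lt0; apply: ereal_sup_ubound.
  by exists t => //=; rewrite in_itv /= t0.
by rewrite lte_fin pmulr_llt0 ?invr_gt0 // subr_lt0.
Unshelve. all: by end_near.
Qed.

End DiniDerivative.

Lemma cvg_ray (R : realType) (E : topologicalLmodType R) (a e : E) :
  (fun t : R => a + t *: e) @ 0^'+ --> a.
Proof.
apply: (@cvg_within_filter _ _ _ (nbhs (0 : R^o))).
suff : (fun t : R^o => a + t *: e) @ (0 : R^o) --> a + 0 *: e.
  by rewrite scale0r addr0.
apply: (cvg_comp (fun t : R^o => (a, t *: e)) _ _ (add_continuous (a, 0 *: e))).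
apply: (@cvg_pair _ _ _ _ (nbhs a) (nbhs (0 *: e))); first exact: cvg_cst.
apply: (cvg_comp (fun t : R^o => (t, e)) _ _ (scale_continuous ((0 : R^o), e))).
by apply: (@cvg_pair _ _ _ _ (nbhs (0 : R^o)) (nbhs e));
  [exact: cvg_id | exact: cvg_cst].
Qed.

Section Pushforward.
Variables (R : numDomainType) (I : finType) (sigma : I -> I) (mu : I -> R).

Definition pushforward i : R := \sum_(j | sigma j == i) mu j.

Lemma pushforward_ge0 i : (forall j, 0 <= mu j) -> 0 <= pushforward i.
Proof. by move=> mu_ge0; apply: sumr_ge0. Qed.

Lemma sum_pushforwardM (h : I -> R) :
  \sum_i pushforward i * h i = \sum_j mu j * h (sigma j).
Proof.
rewrite [RHS](partition_big sigma xpredT) //=; apply: eq_bigr => i _.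
by rewrite /pushforward mulr_suml; apply: eq_bigr => j /eqP ->.
Qed.

Lemma sum_pushforward : \sum_i pushforward i = \sum_j mu j.
Proof.
have := sum_pushforwardM (fun=> 1).
by under eq_bigr do rewrite mulr1; under [RHS]eq_bigr do rewrite mulr1.
Qed.

Lemma pushforward_eq0 i : (forall j, sigma j != i) -> pushforward i = 0.
Proof. by move=> sigma_neq; rewrite /pushforward big_pred0 // => j; exact/negbTE. Qed.

End Pushforward.

Section Problem.
Variables (R : realType) (E : topologicalLmodType R) (m : nat).
Variables (Omega : set E) (F : 'I_m.+1 -> E -> R) (xhat : E).
Hypotheses (Omega_open : open Omega) (solution : solves_Q1 F Omega xhat).
Hypothesis F_diff : forall i, DM_differentiable (F i) xhat.
Hypothesis F_usc :
  forall j : 'I_m.+1, j != ord0 -> F j xhat < 0 -> usc_at (F j) xhat.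

Definition active i := (i == ord0) || (F i xhat == 0).

(* Inactive indices are sent to [ord0]: the alternative is applied to the
   family [h (redirect i)], and its weights are pushed forward along [redirect]. *)
Definition redirect i := if active i then i else ord0.

Lemma active_redirect i : active (redirect i).
Proof. by rewrite /redirect; case: ifP => // _; rewrite /active eqxx. Qed.

Lemma near_feasible : \forall y \near xhat,
  Omega y /\ forall i, i != ord0 -> F i xhat < 0 -> F i y < 0.
Proof.
have [Oxhat _ _] := solution.
near=> y; split; near: y; first by move: Omega_open; rewrite openE; apply.
apply: filter_forall => i; have [i0|_] := boolP (i != ord0); last exact: nearW.
have [Fi0|_] := boolP (F i xhat < 0); last exact: nearW.
apply: filterS (F_usc i0 Fi0 (_ : 0 < - F i xhat)); last by rewrite oppr_gt0.
by move=> y; rewrite subrr => + _ _.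
Unshelve. all: by end_near.
Qed.

(* Along a common direction of [D^+_M]-descent, points [xhat + t e] with small
   [t > 0] would be feasible and improve [F ord0]. *)
Lemma active_no_common_descent e : exists2 i, active i & 0 <= dmplus (F i) xhat e.
Proof.
apply: contrapT => /forall2NP descent.
have [_ feasible optimal] := solution.
have desc i : active i -> \forall t \near 0^'+, F i (xhat + t *: e) < F i xhat.
  move=> Ai; apply: dplus_lt0_descent (F_diff i) _ _.
  have [//|/negP] := descent i; rewrite -ltNge => Fi_lt0.
  exact: le_lt_trans (dplus_le_dmplus (F_diff i) e) Fi_lt0.
have : \forall t \near 0^'+, (forall i, active i -> F i (xhat + t *: e) < F i xhat)
    /\ (Omega (xhat + t *: e) /\
        forall i, i != ord0 -> F i xhat < 0 -> F i (xhat + t *: e) < 0).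
  near=> t; split; near: t.
    apply: filter_forall => i; have [Ai|_] := boolP (active i); last exact: nearW.
    by apply: filterS (desc i Ai) => t + _.
  exact: cvg_ray near_feasible.
case/filter_ex => t [Hdesc [Ot Hneg]].
have : F ord0 xhat <= F ord0 (xhat + t *: e).
  apply: (optimal _ Ot) => i i0; apply: ltW.
  have [Fi0|Fi_ne0] := eqVneq (F i xhat) 0.
    by rewrite -Fi0; apply: Hdesc; rewrite /active Fi0 eqxx orbT.
  by apply: Hneg => //; rewrite lt_neqAle Fi_ne0 feasible.
by rewrite leNgt Hdesc.
Unshelve. all: by end_near.
Qed.

Lemma redirect_no_common_descent e :
  exists i, 0 <= dmplus (F (redirect i)) xhat e.
Proof.
by have [i Ai Fi] := active_no_common_descent e; exists i; rewrite /redirect Ai.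
Qed.

End Problem.

Theorem corollary3p9 (R : realType) (E : topologicalLmodType R) (m : nat)
    (Omega : set E) (F : 'I_m.+1 -> E -> R) (xhat : E) :
  open Omega -> Omega !=set0 ->
  solves_Q1 F Omega xhat ->
  DM_pseudoconvex F Omega xhat ->
  (forall j : 'I_m.+1, j != ord0 -> F j xhat < 0 -> usc_at (F j) xhat) ->
  exists lam : 'I_m.+1 -> R,
    (exists i, lam i != 0) /\
    (forall i, 0 <= lam i) /\
    (forall i : 'I_m.+1, i != ord0 -> lam i * F i xhat = 0) /\
    (lam ord0 * F ord0 xhat = \sum_(i < m.+1) lam i * F i xhat /\
     forall x, Omega x ->
       \sum_(i < m.+1) lam i * F i xhat <= \sum_(i < m.+1) lam i * F i x).
Proof.
move=> Oopen _ sol [Fdiff Fpc] Fusc.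
have [mu [mu_ge0 mu_sum1 mu_dm]] := sublinear_gordan
  (fun i => sublinear_dmplus (Fdiff (redirect F xhat i)))
  (redirect_no_common_descent Oopen sol Fdiff Fusc).
pose lam := pushforward (redirect F xhat) mu.
have lam_ge0 i : 0 <= lam i by apply: pushforward_ge0.
have slack i : i != ord0 -> lam i * F i xhat = 0.
  move=> i0; have [->|Fi0] := eqVneq (F i xhat) 0; first by rewrite mulr0.
  rewrite /lam pushforward_eq0 ?mul0r // => j.
  apply: contraTneq (active_redirect F xhat j) => ->.
  by rewrite /active (negbTE i0) (negbTE Fi0).
exists lam; split; [|split=> //; split=> //; split].
- have [|i /andP[_ /lt0r_neq0]] := psumr_neq0P (P := xpredT) (fun i _ => lam_ge0 i).
    by rewrite sum_pushforward mu_sum1; apply/eqP/oner_neq0.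
  by exists i.
- by rewrite big_ord_recl big1 ?addr0 // => i _; rewrite slack // eq_sym neq_lift.
- move=> x Ox; have [eta] := Fpc x Ox; move/(_ lam lam_ge0).
  rewrite sum_pushforwardM => /(_ (mu_dm eta)).
  by under eq_bigr do rewrite mulrBr; rewrite sumrB subr_ge0.
Qed.
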